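(* Let $\pi\colon(X,T)\to(Y,T)$ be a factor map between topological dynamical systems with $(Y,T)$ minimal, and let $K\ge1$ be an integer. Suppose that for every $y\in Y$ there exists $u\in E(2^X,T)$ such that $\#\,u\circ\pi^{-1}(y)\le K$. Then $\pi$ is almost $k$-to-$1$ for some $k\le K$.
   Context: A topological dynamical system is a pair $(X,T)$ with $X$ a compact metric space and $T$ a homeomorphism. The hyperspace $(2^X,T)$ consists of the nonempty closed subsets of $X$ with the Hausdorff metric and the action $A\mapsto T(A)$. The Ellis semigroup $E(2^X,T)$ is the closure of $\{A\mapsto T^nA: n\in\mathbb{Z}\}$ in $(2^X)^{2^X}$ with the product topology, with composition as operation. For $u\in E(2^X,T)$ and $A\in 2^X$, $u\circ A\in 2^X$ denotes the image of the point $A$ under $u$; equivalently it is the set of $x\in X$ for which there are nets $x_\lambda\in A$ and $m_\lambda\in\mathbb{Z}$ with $T^{m_\lambda}x_\lambda\to x$ and $T^{m_\lambda}\to u$. A factor map $\pi$ is almost $k$-to-$1$ if $\#\pi^{-1}(y)=k$ for all $y$ in a residual subset of $Y$. *)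

From HB Require Import structures.
From mathcomp Require Import all_boot all_order all_algebra.
From mathcomp Require Import all_classical all_reals all_analysis.
Set Implicit Arguments. Unset Strict Implicit. Unset Printing Implicit Defensive.
Import Order.TTheory GRing.Theory Num.Theory.
Local Open Scope classical_set_scope.
Local Open Scope ring_scope.
Local Open Scope card_scope.

Definition iterz {X : Type} (T Tinv : X -> X) (n : int) (x : X) : X :=
  match n with
  | Posz k => iter k T x
  | Negz k => iter k.+1 Tinv x
  end.

(* (X,T) is a topological dynamical system: X compact metric, T a homeomorphism
   (with inverse Tinv). A pseudometric space that is Hausdorff is a metric space. *)
Definition tds {R : realType} (X : pseudoMetricType R) (T Tinv : X -> X) : Prop :=
  [/\ hausdorff_space X, compact [set: X],
      continuous T /\ continuous Tinv,
      cancel T Tinv & cancel Tinv T].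

(* A is a point of the hyperspace 2^X: a nonempty closed subset. *)
Definition hyper {X : topologicalType} (A : set X) : Prop := closed A /\ A !=set0.

(* Hausdorff-metric closeness: every point of A is within e of B and vice versa
   (this gives d_H(A,B) <= e, and is implied by d_H(A,B) < e). *)
Definition hclose {R : realType} {X : pseudoMetricType R} (e : R) (A B : set X) : Prop :=
  (forall a, A a -> exists2 b, B b & ball a e b) /\
  (forall b, B b -> exists2 a, A a & ball b e a).

(* u belongs to the Ellis semigroup E(2^X,T): u is a self-map of 2^X lying in the
   closure, for the product topology of (2^X)^(2^X) (2^X with the Hausdorff metric),
   of the set of maps A |-> T^n A, n in Z.  A basic neighbourhood of u is given by
   finitely many coordinates As 0, ..., As (m-1) and a radius e > 0. *)
Definition ellis {R : realType} {X : pseudoMetricType R} (T Tinv : X -> X)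
    (u : set X -> set X) : Prop :=
  (forall A, hyper A -> hyper (u A)) /\
  (forall (m : nat) (As : 'I_m -> set X), (forall i, hyper (As i)) ->
   forall e : R, 0 < e ->
   exists n : int, forall i, hclose e (iterz T Tinv n @` As i) (u (As i))).

Definition factor_map {X Y : topologicalType} (T : X -> X) (S : Y -> Y) (pi : X -> Y) :=
  [/\ continuous pi, (forall y, exists x, pi x = y) & (forall x, pi (T x) = S (pi x))].

Definition minimal {Y : topologicalType} (S : Y -> Y) : Prop :=
  forall A : set Y, closed A -> S @` A = A -> A = set0 \/ A = setT.

Definition residual {Y : topologicalType} (G : set Y) : Prop :=
  exists U : nat -> set Y, (forall n, open (U n) /\ dense (U n)) /\
    \bigcap_n U n `<=` G.

Definition almost_k_to_1 {X Y : topologicalType} (pi : X -> Y) (k : nat) : Prop :=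
  exists G : set Y, residual G /\ forall y, G y -> pi @^-1` [set y] #= `I_k.

From HB Require Import structures.
From mathcomp Require Import all_boot all_order all_algebra.
From mathcomp Require Import all_classical all_reals all_analysis.
Import Order.TTheory GRing.Theory Num.Theory.
Local Open Scope classical_set_scope.
Local Open Scope ring_scope.
Local Open Scope card_scope.

(* Let U_k(e) be the set of points y whose fibre is covered by the interiors
   of k balls of radius e; it is open because pi is a closed map.  The Ellis
   hypothesis gives a fibre T^p pi^-1(y0) lying close to the set
   u pi^-1(y0) of at most K points; by minimality and compactness of Y every
   point of Y enters a given nonempty open set within boundedly many steps, and
   continuity of these finitely many iterates carries the K small balls along,
   so U_K(e) is dense for every e.  Let k be least such that every U_k(e) is
   dense.  On the residual set of y lying in all U_k(1/(n+1)), the fibre of y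
   has at most k points since X is Hausdorff; it has at least k points, since
   the orbit of y meets the open set missed by some U_(k-1)(e), and T^n maps
   the fibre of y bijectively onto the fibre of S^n y. *)

Lemma iter_morph {A B : Type} {p : A -> B} {f : A -> A} {g : B -> B} :
  {morph p : x / f x >-> g x} ->
  forall n, {morph p : x / iter n f x >-> iter n g x}.
Proof. by move=> pf; elim=> [//|n IHn] x /=; rewrite pf IHn. Qed.

Lemma iter_can {A : Type} {f g : A -> A} :
  cancel f g -> forall n, cancel (iter n f) (iter n g).
Proof. by move=> fK; elim=> [//|n IHn] x; rewrite iterSr /= fK IHn. Qed.

Lemma continuous_iter {Z : topologicalType} {f : Z -> Z} :
  continuous f -> forall n, continuous (iter n f).
Proof.
move=> fC; elim=> [|n IHn] x /=; first exact: cvg_id.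
exact: (continuous_comp (IHn x) (fC _)).
Qed.

Section IntegerIterates.
Context {X : Type} {T Tinv : X -> X}.
Hypotheses (TK : cancel T Tinv) (TinvK : cancel Tinv T).

Lemma iterzK n : cancel (iterz T Tinv n) (iterz T Tinv (- n)).
Proof.
case: n => [[|k]|k] x //; first exact: iter_can TK k.+1 x.
have -> : - Negz k = k.+1 by rewrite NegzE opprK.
exact: iter_can TinvK k.+1 x.
Qed.

Lemma iterzNK n : cancel (iterz T Tinv (- n)) (iterz T Tinv n).
Proof. by move=> x; have := iterzK (- n) x; rewrite opprK. Qed.

Lemma iterzSr n x : iterz T Tinv n (T x) = iterz T Tinv (n + 1) x.
Proof.
case: n => [k|[|k]].
- by rewrite -PoszD addn1 /= -iterSr.
- by rewrite /= TK.
- have -> : Negz k.+1 + 1 = Negz k by rewrite !NegzE -addn1 PoszD opprD addrK.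
  by rewrite /iterz iterSr TK.
Qed.

End IntegerIterates.

Lemma iterz_morph {X Y : Type} {T Tinv : X -> X} {S Sinv : Y -> Y} {p : X -> Y} :
  cancel Tinv T -> cancel S Sinv -> {morph p : x / T x >-> S x} ->
  forall n, {morph p : x / iterz T Tinv n x >-> iterz S Sinv n x}.
Proof.
move=> TinvK SK pT; have pTinv : {morph p : x / Tinv x >-> Sinv x}.
  by move=> x; rewrite -[LHS]SK -pT TinvK.
by case=> k x; apply: iter_morph.
Qed.

Lemma continuous_iterz {Z : topologicalType} {T Tinv : Z -> Z} :
  continuous T -> continuous Tinv -> forall n, continuous (iterz T Tinv n).
Proof. by move=> TC TinvC [k|k]; apply: continuous_iter. Qed.

Lemma minimal_orbit_meets_open {Y : topologicalType} {S Sinv : Y -> Y} :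
    continuous S -> continuous Sinv -> cancel S Sinv -> cancel Sinv S ->
    minimal S ->
  forall W, open W -> W !=set0 -> forall y, exists n, W (iterz S Sinv n y).
Proof.
move=> SC SinvC SK SinvK minS W oW [w Ww] y.
pose U := \bigcup_(n in [set: int]) (iterz S Sinv n @^-1` W).
have US z : U (S z) <-> U z.
  split=> -[n _ Wn]; [exists (n + 1) | exists (n - 1)] => //=.
    by rewrite -iterzSr.
  by rewrite iterzSr // subrK.
have closedNU : closed (~` U).
  rewrite closedC; apply: bigcup_open => n _.
  by move/continuousP: (continuous_iterz SC SinvC n); apply.
have invNU : S @` (~` U) = ~` U.
  apply/seteqP; split=> [_ [z NUz <-] /US//|z NUz].
  by exists (Sinv z); [move=> /US; rewrite SinvK | exact: SinvK].
have [NU0|NUT] := minS _ closedNU invNU.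
  have [n _ Wn] : U y by apply: contrapT => NUy; suff : (~` U) y by rewrite NU0.
  by exists n.
have NUw : (~` U) w by rewrite NUT.
by exfalso; apply: NUw; exists 0.
Qed.

Lemma near_finite_forall {T : Type} {I : choiceType} (F : set_system T) (D : set I)
    (P : I -> T -> Prop) :
  Filter F -> finite_set D -> (forall i, D i -> \forall t \near F, P i t) ->
  \forall t \near F, forall i, D i -> P i t.
Proof.
move=> FF finD DP; have : F (\bigcap_(i in D) P i).
  rewrite -(fset_setK finD); apply: filter_bigI => i.
  by rewrite in_fset_set // inE; exact: DP.
by apply: filterS => t Pt i Di; exact: Pt.
Qed.

Lemma card_le_II_or_gt {T : Type} (A : set T) n : A #<= `I_n \/ `I_n.+1 #<= A.
Proof.
have [/finite_setP[m Am]|/infiniteP NA] := pselect (finite_set A).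
  have [mn|nm] := leqP m n.
    by left; rewrite (card_le_eql Am) card_le_II.
  by right; rewrite (card_le_eqr Am) card_le_II.
by right; exact: card_le_trans (card_leT _) NA.
Qed.

Lemma card_eq_II_of_minimal {T : Type} (A : set T) k :
  A #<= `I_k -> (forall j, (j < k)%N -> ~ (A #<= `I_j)) -> A #= `I_k.
Proof.
rewrite card_eq_le => -> /=; case: k => [_|k Ak]; first by rewrite II0 card_ge0.
by have [/(Ak k (ltnSn k))|] := card_le_II_or_gt A k.
Qed.

(* Interiors, since balls of a pseudometric space need not be open; this is
   what makes [coverable_fibers] open. *)
Definition coverable {R : realType} {X : pseudoMetricType R}
    (A : set X) (k : nat) (e : R) :=
  exists2 C : set X, C #<= `I_k & A `<=` \bigcup_(c in C) (ball c e)°.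

Section BallCovers.
Context {R : realType} {X : pseudoMetricType R}.

Lemma coverableS {A B : set X} {k e} :
  A `<=` B -> coverable B k e -> coverable A k e.
Proof. by move=> AB [C Ck BC]; exists C => // a /AB /BC. Qed.

Lemma le_coverable {A : set X} {k e e'} :
  e <= e' -> coverable A k e -> coverable A k e'.
Proof.
move=> ee' [C Ck AC]; exists C => // a /AC[c Cc ca]; exists c => //.
exact: interiorS (le_ball ee') _ ca.
Qed.

Lemma card_le_coverable (A : set X) k e :
  0 < e -> A #<= `I_k -> coverable A k e.
Proof.
by move=> e_gt0 Ak; exists A => // a Aa; exists a => //; exact: nbhsx_ballx.
Qed.

Lemma near0_ball_image {Z : pseudoMetricType R} (f : X -> Z) (c : X) (e : R) :
  0 < e -> {for c, continuous f} ->
  \forall d \near 0^'+, f @` ball c d `<=` (ball (f c) e)°.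
Proof.
move=> e_gt0 fC.
have /nbhs_ballP[r r_gt0 cr] := fC _ (nbhs_interior (nbhsx_ballx (f c) e e_gt0)).
near=> d => _ [x cdx <-]; apply: cr; apply: le_ball cdx.
by near: d; exact: nbhs_right_ltW.
Unshelve. all: by end_near. Qed.

Lemma coverable_image {Z : pseudoMetricType R} (f : X -> Z) (A C : set X) k d e :
  C #<= `I_k -> A `<=` \bigcup_(c in C) ball c d ->
  (forall c, C c -> f @` ball c d `<=` (ball (f c) e)°) -> coverable (f @` A) k e.
Proof.
move=> Ck AC fC; exists (f @` C); first exact: card_le_trans (card_image_le f C) Ck.
move=> _ [a /AC[c Cc cda] <-]; exists (f c); first by exists c.
by apply: (fC c Cc); exists a.
Qed.

Lemma near0_ball_separated (x y : X) : hausdorff_space X ->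
  \forall r \near 0^'+, forall z, ball z r x -> ball z r y -> x = y.
Proof.
rewrite ball_hausdorff => hX; have [->|xy] := eqVneq x y; first by near=> r.
have [[r1 r2] /= /eqP r12] := hX _ _ xy.
near=> r => z zx zy; suff : (ball x r1%:num `&` ball y r2%:num) z by rewrite r12.
split; [apply: le_ball (ball_sym zx) | apply: le_ball (ball_sym zy)].
- by near: r; exact: nbhs_right_ltW.
- by near: r; exact: nbhs_right_ltW.
Unshelve. all: by end_near. Qed.

Lemma card_le_ball_cover {D Z : set X} {r} :
  D `<=` \bigcup_(z in Z) ball z r ->
  (forall x y z, D x -> D y -> ball z r x -> ball z r y -> x = y) -> D #<= Z.
Proof.
move=> DZ sepD; pose g x := xget x [set z | Z z /\ ball z r x].
have gP x : D x -> Z (g x) /\ ball (g x) r x.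
  by move=> /DZ[z Zz zx]; apply: (@xgetPex _ x [set z | Z z /\ ball z r x]); exists z.
have g_inj : {in D &, injective g}.
  move=> x y /[!inE] Dx Dy gxy; apply: (sepD x y (g x) Dx Dy).
    exact: (gP x Dx).2.
  by rewrite gxy; exact: (gP y Dy).2.
rewrite -(card_le_eql (inj_card_eq g_inj)); apply: subset_card_le.
by move=> _ [x Dx <-]; exact: (gP x Dx).1.
Qed.

Lemma card_le_of_coverable (A : set X) k : hausdorff_space X ->
  (forall e, 0 < e -> coverable A k e) -> A #<= `I_k.
Proof.
move=> hX Acov; have [//|/card_subP[D DI DA]] := card_le_II_or_gt A k.
have finD : finite_set D by exists k.+1.
have sep : \forall r \near 0^'+,
    forall x, D x -> forall y, D y -> forall z, ball z r x -> ball z r y -> x = y.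
  apply: near_finite_forall => // x _; apply: near_finite_forall => // y _.
  exact: near0_ball_separated.
have [r [r_gt0 sepD]] := filter_ex (filterI (nbhs_right_gt 0) sep).
have [C Ck DC] := coverableS DA (Acov r r_gt0).
have DC' : D `<=` \bigcup_(c in C) ball c r.
  by move=> x /DC[c Cc cx]; exists c => //; exact: interior_subset.
have := card_le_ball_cover DC' (fun x y z Dx Dy => sepD x Dx y Dy z).
rewrite (card_le_eql DI) => /card_le_trans/(_ Ck).
by rewrite card_le_II ltnn.
Qed.

End BallCovers.

Definition coverable_fibers {R : realType} {X Y : pseudoMetricType R} (pi : X -> Y)
    (k : nat) (e : R) : set Y :=
  [set y | coverable (pi @^-1` [set y]) k e].

Lemma open_coverable_fibers {R : realType} {X Y : pseudoMetricType R}
    (pi : X -> Y) k e :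
  compact [set: X] -> hausdorff_space Y -> continuous pi ->
  open (coverable_fibers pi k e).
Proof.
move=> cX hY piC; pose V (C : set X) := \bigcup_(c in C) (ball c e)°.
have -> : coverable_fibers pi k e =
    \bigcup_(C in [set C | C #<= `I_k]) ~` (pi @` ~` V C).
  apply/seteqP; split=> y [C Ck yC]; exists C => //.
    by move=> [x NVx pxy]; apply: NVx; exact: yC.
  by move=> x pxy; apply: contrapT => NVx; apply: yC; exists x.
apply: bigcup_open => C _; rewrite openC; apply: compact_closed => //.
apply: continuous_compact; first exact: continuous_subspaceT.
apply: subclosed_compact cX _ => //; rewrite closedC.
by apply: bigcup_open => c _; exact: open_interior.
Qed.

Section FactorMap.
Context {R : realType} {X Y : pseudoMetricType R}.
Context {T Tinv : X -> X} {S Sinv : Y -> Y} { pi : X -> Y }.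
Hypotheses (tdsX : tds T Tinv) (tdsY : tds S Sinv) (piF : factor_map T S pi).
Hypothesis minS : minimal S.

Let TK : cancel T Tinv. Proof. by case: tdsX. Qed.
Let TinvK : cancel Tinv T. Proof. by case: tdsX. Qed.
Let SK : cancel S Sinv. Proof. by case: tdsY. Qed.
Let SinvK : cancel Sinv S. Proof. by case: tdsY. Qed.
Let TC : continuous T. Proof. by case: tdsX => _ _ []. Qed.
Let TinvC : continuous Tinv. Proof. by case: tdsX => _ _ []. Qed.
Let SC : continuous S. Proof. by case: tdsY => _ _ []. Qed.
Let SinvC : continuous Sinv. Proof. by case: tdsY => _ _ []. Qed.

Let orbit_meets := minimal_orbit_meets_open SC SinvC SK SinvK minS.

Lemma fiber_iterz n y :
  pi @^-1` [set iterz S Sinv n y] = iterz T Tinv n @` (pi @^-1` [set y]).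
Proof.
have [_ _ piT] := piF; have piTz := iterz_morph TinvK SK piT.
apply/seteqP; split=> [x pxy | _ [x pxy <-]]; last by rewrite /= piTz pxy.
exists (iterz T Tinv (- n) x); last exact: iterzNK.
by rewrite /= piTz pxy iterzK.
Qed.

Lemma hyper_fiber y : hyper (pi @^-1` [set y]).
Proof.
have [piC pi_surj _] := piF; have [hY _ _ _ _] := tdsY.
split; last by have [x pxy] := pi_surj y; exists x.
move/continuous_closedP: piC; apply.
exact/accessible_closed_set1/hausdorff_accessible.
Qed.

Lemma dense_coverable_fibers K :
  (forall y, exists u, ellis T Tinv u /\ u (pi @^-1` [set y]) #<= `I_K) ->
  forall e, 0 < e -> dense (coverable_fibers pi K e).
Proof.
move=> ellisK e e_gt0 O [y0 Oy0] oO.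
have [u [[_ u_approx] uK]] := ellisK y0.
set C := u (pi @^-1` [set y0]).
have finC : finite_set C by apply/finite_set_leP; exists K.
pose carries n d := forall c, C c ->
  iterz T Tinv n @` ball c d `<=` (ball (iterz T Tinv n c) e)°.
pose returns d y := exists n, O (iterz S Sinv n y) /\ carries n d.
(* Compactness of Y makes the return time, hence the radius d, uniform in y. *)
have : \forall d \near 0^'+, [set: Y] `<=` returns d.
  have [_ cY _ _ _] := tdsY.
  apply: ((compact_near_coveringP [set: Y]).1 cY R (0^'+) returns _) => y _.
  have [n On] := orbit_meets O oO (ex_intro _ y0 Oy0) y.
  exists (iterz S Sinv n @^-1` O, carries n); last first.
    by move=> [y' d] /= [Oy' Bd]; exists n.
  split=> /=; first exact: continuous_iterz SC SinvC n y _ (open_nbhs_nbhs (conj oO On)).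
  apply: (near_finite_forall _ _ _ (at_right_proper_filter 0) finC) => c _.
  exact: near0_ball_image e_gt0 (continuous_iterz TC TinvC n c).
move=> /(filterI (nbhs_right_gt 0))/filter_ex[d [d_gt0 /(_ _ I) ret]].
have [p /(_ ord0)[Tp_near _]] :=
  u_approx 1%N (fun=> _) (fun=> hyper_fiber y0) d d_gt0.
have [n [On TnC]] := ret (iterz S Sinv p y0).
exists (iterz S Sinv n (iterz S Sinv p y0)); split => //.
rewrite /coverable_fibers /= !fiber_iterz; apply: coverable_image uK _ TnC.
by move=> a /Tp_near[c Cc ac]; exists c => //; exact: ball_sym.
Qed.

Lemma fiber_not_card_le k e y : 0 < e -> ~ dense (coverable_fibers pi k e) ->
  ~ (pi @^-1` [set y] #<= `I_k).
Proof.
move=> e_gt0 /denseNE[W [[w [oW Ww]] WU0]] yk.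
have [n Wn] := orbit_meets W oW (ex_intro _ w Ww) y.
suff : (W `&` coverable_fibers pi k e) (iterz S Sinv n y) by rewrite WU0.
split => //; rewrite /coverable_fibers /= fiber_iterz.
by apply: card_le_coverable e_gt0 _; exact: card_le_trans (card_image_le _ _) yk.
Qed.

End FactorMap.

Theorem lemma5p2 (R : realType) (X Y : pseudoMetricType R)
    (T Tinv : X -> X) (S Sinv : Y -> Y) (pi : X -> Y) (K : nat) :
  tds T Tinv -> tds S Sinv -> factor_map T S pi -> minimal S ->
  (1 <= K)%N ->
  (forall y : Y, exists u : set X -> set X,
      ellis T Tinv u /\ u (pi @^-1` [set y]) #<= `I_K) ->
  exists k : nat, (k <= K)%N /\ almost_k_to_1 pi k.
Proof.
move=> tdsX tdsY piF minS _ ellisK.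
pose dense_covers k := forall e, 0 < e -> dense (coverable_fibers pi k e).
have denseK : dense_covers K := dense_coverable_fibers tdsX tdsY piF minS K ellisK.
have [k0 /asboolP dense_k0 k0_min] :=
  ex_minnP (ex_intro (fun k => `[< dense_covers k >]) K (asboolT denseK)).
exists k0; split; first exact/k0_min/asboolT.
have [hX cX _ _ _] := tdsX; have [hY _ _ _ _] := tdsY; have [piC _ _] := piF.
pose U n := coverable_fibers pi k0 n.+1%:R^-1.
exists (\bigcap_n U n); split.
  exists U; split=> // n; split; first exact: open_coverable_fibers.
  by apply: dense_k0; rewrite invr_gt0 ltr0n.
move=> y Uy; apply: card_eq_II_of_minimal.
  apply: card_le_of_coverable hX _ => e e_gt0.
  have [n _ /(_ n (leqnn n)) ne] := near_infty_natSinv_lt (PosNum e_gt0).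
  exact: le_coverable (ltW ne) (Uy n I).
move=> j jk0; have /existsNP[e /not_implyP[e_gt0 not_dense]] : ~ dense_covers j.
  by move=> /asboolT/k0_min; rewrite leqNgt jk0.
exact: fiber_not_card_le tdsX tdsY piF minS j e y e_gt0 not_dense.
Qed.
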